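(* For every point $x$ of the Cayley complex $X$ of $F$ we have $N_{\min}(x)-2\le \mathrm{lev}(x)<4N_{\max}(x)+1$, and moreover $N_{\max}(x)-N_{\min}(x)\le 9$.
   Context: $X$ is the Cayley 2-complex of Thompson's group $F$ with presentation $\langle x_0,x_1\mid [x_0x_1^{-1},x_0^{-1}x_1x_0],[x_0x_1^{-1},x_0^{-2}x_1x_0^2]\rangle$ (relators of lengths 10 and 14), $X^0=F$. For $g\in F$, $N(g)$ is the number of carets in either tree of the reduced tree pair diagram of $g$. For $x\in X$: if $x=g\in X^0$, $N_{\max}(x)=N_{\min}(x)=N(g)$; if $x$ is interior to an edge with endpoints $g,h$, $N_{\max}(x)=\max(N(g),N(h))$, $N_{\min}(x)=\min(N(g),N(h))$; if $x$ is interior to a 2-cell with boundary vertices $g_1,\dots,g_n$, $N_{\max}(x)$ and $N_{\min}(x)$ are the max and min of the $N(g_i)$. Levels: $\mathrm{lev}(g)$ is the word length of $g$ over $\{x_0^{\pm1},x_1^{\pm1}\}$; for $x$ interior to an edge with endpoints $g,h$, $\mathrm{lev}(x)=\frac{\mathrm{lev}(g)+\mathrm{lev}(h)}{2}+\frac14$; for $x$ interior to a 2-cell with boundary vertices $g_1,\dots,g_n$, $\mathrm{lev}(x)=\frac1n\sum_i\mathrm{lev}(g_i)+\frac14+\frac1c$ with $c=4\cdot10\cdot14+1$. *)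

From mathcomp Require Import all_boot all_algebra.
From Stdlib Require Import ClassicalEpsilon.
Set Implicit Arguments. Unset Strict Implicit. Unset Printing Implicit Defensive.
Import GRing.Theory Num.Theory.

Inductive tree := Leaf | Node of tree & tree.

Fixpoint carets (t : tree) : nat :=
  match t with Leaf => 0 | Node l r => (carets l + carets r).+1 end.

(* leaf addresses, left to right (false = left, true = right) *)
Fixpoint leaves (t : tree) : seq (seq bool) :=
  match t with
  | Leaf => [:: [::]]
  | Node l r => map (cons false) (leaves l) ++ map (cons true) (leaves r)
  end.

Definition stream := nat -> bool.
Definition map_st := stream -> stream.

Definition feq (f g : map_st) : Prop := forall s n, f s n = g s n.

(* index of the leaf of t whose address is a prefix of s, and its depth *)
Fixpoint locate (t : tree) (s : stream) (d : nat) : nat * nat :=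
  match t with
  | Leaf => (0, d)
  | Node l r =>
      if s d then let: (i, d') := locate r s d.+1 in (size (leaves l) + i, d')
      else locate l s d.+1
  end.

(* the map of Cantor space defined by the tree pair diagram (T1, T2):
   the i-th leaf address of the domain tree T1 is replaced by the i-th leaf
   address of the range tree T2 *)
Definition tp_map (T1 T2 : tree) : map_st := fun s =>
  let: (i, d) := locate T1 s 0 in
  let b := nth [::] (leaves T2) i in
  fun n => if n < size b then nth false b n else s (n - size b + d).

Definition tree_pair (T1 T2 : tree) : Prop :=
  size (leaves T1) = size (leaves T2).

Definition exposed (t : tree) (i : nat) : Prop :=
  i.+1 < size (leaves t) /\
  exists a, nth [::] (leaves t) i = rcons a false /\
            nth [::] (leaves t) i.+1 = rcons a true.

Definition reduced (T1 T2 : tree) : Prop :=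
  ~ exists i, exposed T1 i /\ exposed T2 i.

Definition Ncarets (g : map_st) (n : nat) : Prop :=
  exists T1 T2, [/\ tree_pair T1 T2, feq (tp_map T1 T2) g, reduced T1 T2
                 & carets T1 = n].

Definition Ncar (g : map_st) : nat := epsilon (inhabits 0%N) (Ncarets g).

Inductive letter := X0 | X0i | X1 | X1i.
Definition word := seq letter.

(* Cannon-Floyd-Parry x0 : [0,1/2]->[0,1/4], [1/2,3/4]->[1/4,1/2], [3/4,1]->[1/2,1] *)
Definition x0_dom := Node Leaf (Node Leaf Leaf).
Definition x0_rng := Node (Node Leaf Leaf) Leaf.
(* x1 : identity on [0,1/2], and x0 rescaled on [1/2,1] *)
Definition x1_dom := Node Leaf (Node Leaf (Node Leaf Leaf)).
Definition x1_rng := Node Leaf (Node (Node Leaf Leaf) Leaf).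

Definition letter_map (a : letter) : map_st :=
  match a with
  | X0 => tp_map x0_dom x0_rng
  | X0i => tp_map x0_rng x0_dom
  | X1 => tp_map x1_dom x1_rng
  | X1i => tp_map x1_rng x1_dom
  end.

(* group product g h = g o h ; a word a1 ... ak evaluates to a1 o ... o ak *)
Definition eval (w : word) : map_st :=
  foldr (fun a f => fun s => letter_map a (f s)) id w.

(* level of a vertex: word length over {x0^{+-1}, x1^{+-1}} *)
Definition is_word_length (g : map_st) (n : nat) : Prop :=
  (exists w : word, size w = n /\ feq (eval w) g) /\
  (forall w : word, feq (eval w) g -> (n <= size w)%N).

Definition lev (g : map_st) : nat := epsilon (inhabits 0%N) (is_word_length g).

Definition linv (a : letter) : letter :=
  match a with X0 => X0i | X0i => X0 | X1 => X1i | X1i => X1 end.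
Definition winv (w : word) : word := rev (map linv w).
Definition commw (u v : word) : word := winv u ++ winv v ++ u ++ v.

(* [x0 x1^-1, x0^-1 x1 x0] (length 10) and [x0 x1^-1, x0^-2 x1 x0^2] (length 14) *)
Definition rel1 : word := commw [:: X0; X1i] [:: X0i; X1; X0].
Definition rel2 : word := commw [:: X0; X1i] [:: X0i; X0i; X1; X0; X0].
Definition relators : seq word := [:: rel1; rel2].

(* Vertices are the elements eval w; the edges join g and g a (a a generator
   or its inverse); the 2-cell based at g for relator r has boundary vertices
   g * (prefix of r of length i), i = 0 .. |r|-1.  A point of X is described
   by the (open) cell containing it; all quantities below depend only on it. *)
Inductive point :=
  | PVert of word
  | PEdge of word & letter
  | PCell of word & 'I_2.

Definition rel_of (j : 'I_2) : word := nth [::] relators j.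

Definition cell_vertices (w r : word) : seq map_st :=
  [seq eval (w ++ take i r) | i <- iota 0 (size r)].

Definition pt_vertices (x : point) : seq map_st :=
  match x with
  | PVert w => [:: eval w]
  | PEdge w a => [:: eval w; eval (w ++ [:: a])]
  | PCell w j => cell_vertices w (rel_of j)
  end.

Definition Nmax (x : point) : nat := \max_(g <- pt_vertices x) Ncar g.
Definition Nmin (x : point) : nat :=
  \big[minn/Ncar (head id (pt_vertices x))]_(g <- pt_vertices x) Ncar g.

Definition cconst : nat := 4 * 10 * 14 + 1.

Local Open Scope ring_scope.
Definition levp (x : point) : rat :=
  match x with
  | PVert w => (lev (eval w))%:R
  | PEdge w a => ((lev (eval w))%:R + (lev (eval (w ++ [:: a])))%:R) / 2%:R
                 + 1 / 4%:R
  | PCell w j =>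
      (\sum_(g <- cell_vertices w (rel_of j)) (lev g)%:R)
        / (size (rel_of j))%:R + 1 / 4%:R + 1 / cconst%:R
  end.

(* Elements of F are compared through tree pair diagrams; N(g) is the number of carets of a
   reduced diagram, which is minimal among all diagrams of g.  Right multiplication by a letter
   is realised on a diagram by adding at most three carets and performing one rotation of the
   domain tree, and the potential carets + deficit grows by at most one per letter; hence
   N(gu) <= N(g) + |u| + 2, in particular N(g) <= lev(g) + 2.  Conversely any tree with n carets
   is rotated to the left comb by at most 2n letters, so lev(g) <= 4 N(g).  The vertices of a
   cell lie on a closed relator loop of length at most 14, so two of them differ by a word of
   length at most 7 and their N differ by at most 9.  Finally lev at a point is the mean of the
   vertex levels plus an offset in [0, 1). *)

From mathcomp Require Import all_boot all_algebra zify lra.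
From Stdlib Require Import FunctionalExtensionality Classical ClassicalEpsilon.
Import GRing.Theory Num.Theory.
Set Implicit Arguments. Unset Strict Implicit. Unset Printing Implicit Defensive.

Definition prepend (u : seq bool) (s : stream) : stream :=
  fun n => if n < size u then nth false u n else s (n - size u).

Definition prefix_at (d : nat) (u : seq bool) (s : stream) : Prop :=
  forall k, k < size u -> s (d + k) = nth false u k.

Lemma prefix_at_prepend u s : prefix_at 0 u (prepend u s).
Proof. by move=> k Hk; rewrite /prepend add0n Hk. Qed.

Lemma prefix_at_cons d b u s :
  prefix_at d (b :: u) s <-> s d = b /\ prefix_at d.+1 u s.
Proof.
split=> [H|[Hb H] [|k] Hk /=]; last 2 first.
- by rewrite addn0.
- by rewrite addnS -addSn H.
split; first by rewrite -[d]addn0 (H 0).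
by move=> k Hk; rewrite addSn -addnS (H k.+1).
Qed.

Lemma prepend_prefix u s : prefix_at 0 u s -> s = prepend u (fun n => s (n + size u)).
Proof.
move=> H; apply: functional_extensionality => n; rewrite /prepend.
case: ifP => Hn; first by rewrite -H.
by rewrite subnK // leqNgt Hn.
Qed.

Lemma prepend_cat u w s : prepend (u ++ w) s = prepend u (prepend w s).
Proof.
apply: functional_extensionality => n; rewrite /prepend size_cat nth_cat.
case: (ltnP n (size u)) => H1; first by rewrite ltn_addr.
by rewrite ltn_subLR // subnDA.
Qed.

Lemma prepend_inj u w : (forall s, prepend u s = prepend w s) -> u = w.
Proof.
wlog Hle : u w / size u <= size w.
  move=> Hw H; case: (leqP (size u) (size w)) => Hs; first exact: Hw Hs H.
  by symmetry; apply: (Hw w u (ltnW Hs)) => s; rewrite H.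
move=> H; have Hsz : size u = size w.
  apply/eqP; rewrite eqn_leq Hle /= leqNgt; apply/negP => Hlt.
  have := congr1 (fun f => f (size w)) (H (fun n => n == 0)).
  rewrite /prepend ltnn subnn /= ifN; last by rewrite -leqNgt ltnW.
  by rewrite subn_eq0 leqNgt Hlt.
apply: (@eq_from_nth _ false) => // k Hk.
have := congr1 (fun f => f k) (H (fun _ => false)).
by rewrite /prepend Hk -Hsz Hk.
Qed.

Lemma prefix_at_take u w s : prefix_at 0 u s -> prefix_at 0 w s -> size u <= size w ->
  w = u ++ drop (size u) w.
Proof.
move=> Hu Hw Hs; rewrite -{1}(cat_take_drop (size u) w); congr (_ ++ _).
apply: (@eq_from_nth _ false); first by rewrite size_takel.
move=> k; rewrite size_takel // => Hk.
by rewrite nth_take // -Hu // Hw // (leq_trans Hk Hs).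
Qed.

Lemma size_leaves T : size (leaves T) = (carets T).+1.
Proof.
elim: T => [//|l IHl r IHr] /=.
by rewrite size_cat !size_map IHl IHr addSn addnS.
Qed.

Lemma size_leaves_Node l r : size (leaves (Node l r)) = size (leaves l) + size (leaves r).
Proof. by rewrite /= size_cat !size_map. Qed.

Lemma nth_leaves_Node l r i : i < size (leaves (Node l r)) ->
  nth [::] (leaves (Node l r)) i =
  if i < size (leaves l) then false :: nth [::] (leaves l) i
  else true :: nth [::] (leaves r) (i - size (leaves l)).
Proof.
rewrite size_leaves_Node => Hs; rewrite /= nth_cat size_map; case: ifP => Hi.
  by rewrite (nth_map [::]).
by rewrite (nth_map [::]) // ltn_subLR // leqNgt Hi.
Qed.

Lemma nth_leaves_Node_r l r i : i < size (leaves r) ->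
  nth [::] (leaves (Node l r)) (size (leaves l) + i) = true :: nth [::] (leaves r) i.
Proof.
move=> Hi; rewrite nth_leaves_Node ?size_leaves_Node ?ltn_add2l //.
by rewrite ltnNge leq_addr /= addKn.
Qed.

Lemma nth_leaves_Node_l l r i : i < size (leaves l) ->
  nth [::] (leaves (Node l r)) i = false :: nth [::] (leaves l) i.
Proof. by move=> Hi; rewrite nth_leaves_Node ?Hi // size_leaves_Node ltn_addr. Qed.

Lemma locate_leaf T s d i :
  i < size (leaves T) -> prefix_at d (nth [::] (leaves T) i) s ->
  locate T s d = (i, d + size (nth [::] (leaves T) i)).
Proof.
elim: T s d i => [|l IHl r IHr] s d i /=; first by case: i => // _ _; rewrite addn0.
move=> Hi; rewrite -/(leaves (Node l r)) nth_leaves_Node //.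
case: ifP => Hil /prefix_at_cons [-> Hp].
  by rewrite (IHl s d.+1 i Hil Hp) /= addSnnS.
have Hir : i - size (leaves l) < size (leaves r).
  rewrite ltn_subLR; last by rewrite leqNgt Hil.
  by rewrite -size_leaves_Node.
by rewrite (IHr s d.+1 _ Hir Hp) /= addSnnS subnKC // leqNgt Hil.
Qed.

Lemma locateP T s d :
  let: (i, d') := locate T s d in
  [/\ i < size (leaves T), d' = d + size (nth [::] (leaves T) i)
    & prefix_at d (nth [::] (leaves T) i) s].
Proof.
elim: T s d => [|l IHl r IHr] s d /=; first by split => //; rewrite addn0.
rewrite -/(leaves (Node l r)).
case Hsd: (s d).
  case: (locate r s d.+1) (IHr s d.+1) => [i d'] [H1 -> H3].
  rewrite nth_leaves_Node_r // size_leaves_Node ltn_add2l /= addSnnS.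
  by split => //; apply/prefix_at_cons.
case: (locate l s d.+1) (IHl s d.+1) => [i d'] [H1 -> H3].
rewrite nth_leaves_Node_l // size_leaves_Node ltn_addr //= addSnnS.
by split => //; apply/prefix_at_cons.
Qed.

Lemma tp_map_leaf T1 T2 i s : i < size (leaves T1) ->
  tp_map T1 T2 (prepend (nth [::] (leaves T1) i) s) = prepend (nth [::] (leaves T2) i) s.
Proof.
move=> Hi; rewrite /tp_map (locate_leaf Hi (@prefix_at_prepend _ s)) add0n.
apply: functional_extensionality => n; rewrite /prepend.
by case: ifP => // Hn; rewrite ltnNge leq_addl /= addnK.
Qed.

Lemma tp_map_eq T1 T2 (f : map_st) :
  (forall i, i < size (leaves T1) -> forall s,
     f (prepend (nth [::] (leaves T1) i) s) = prepend (nth [::] (leaves T2) i) s) ->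
  tp_map T1 T2 = f.
Proof.
move=> H; apply: functional_extensionality => s.
have := locateP T1 s 0; case: (locate T1 s 0) => i d [Hi _ Hp].
by rewrite (prepend_prefix Hp) tp_map_leaf // H.
Qed.

Lemma tp_map_id T : tp_map T T = id.
Proof. exact: tp_map_eq. Qed.

Lemma tp_map_comp A B C : tree_pair A B ->
  (fun s => tp_map B C (tp_map A B s)) = tp_map A C.
Proof.
move=> HAB; symmetry; apply: tp_map_eq => i Hi s.
by rewrite !tp_map_leaf // -HAB.
Qed.

Lemma feqE f g : feq f g <-> f = g.
Proof.
split=> [H|->//]; apply: functional_extensionality => s.
by apply: functional_extensionality => n; apply: H.
Qed.

Definition letter_dom (a : letter) : tree :=
  match a with X0 => x0_dom | X0i => x0_rng | X1 => x1_dom | X1i => x1_rng end.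
Definition letter_rng (a : letter) : tree :=
  match a with X0 => x0_rng | X0i => x0_dom | X1 => x1_rng | X1i => x1_dom end.

Lemma letter_mapE a : letter_map a = tp_map (letter_dom a) (letter_rng a).
Proof. by case: a. Qed.

Lemma letter_tree_pair a : tree_pair (letter_dom a) (letter_rng a).
Proof. by case: a. Qed.

Lemma letter_mapK a : cancel (letter_map (linv a)) (letter_map a).
Proof.
move=> s; have -> : letter_map (linv a) = tp_map (letter_rng a) (letter_dom a) by case: a.
have Hsym : tree_pair (letter_rng a) (letter_dom a).
  by rewrite /tree_pair (letter_tree_pair a).
by rewrite letter_mapE (congr1 (fun f => f s) (tp_map_comp _ Hsym)) tp_map_id.
Qed.

Lemma eval_cat u w s : eval (u ++ w) s = eval u (eval w s).
Proof. by elim: u => [//|a u IH] /=; rewrite IH. Qed.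

Lemma eval_winv w : cancel (eval (winv w)) (eval w).
Proof.
elim: w => [//|a w IH] s.
by rewrite /winv /= rev_cons -cats1 eval_cat /= -/(winv w) IH letter_mapK.
Qed.

Lemma size_winv w : size (winv w) = size w.
Proof. by rewrite /winv size_rev size_map. Qed.

(* A block (p, q, X) stands for the leaves p ++ x (domain side) and q ++ x (range side), x in X. *)
Definition block := (seq bool * seq bool * seq (seq bool))%type.
Definition blocks_dom (bs : seq block) := flatten [seq [seq b.1.1 ++ x | x <- b.2] | b <- bs].
Definition blocks_rng (bs : seq block) := flatten [seq [seq b.1.2 ++ x | x <- b.2] | b <- bs].

Lemma size_blocks bs : size (blocks_dom bs) = size (blocks_rng bs).
Proof. by elim: bs => [//|b bs IH]; rewrite /= !size_cat !size_map IH. Qed.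

Lemma nth_blocks (P : seq bool -> seq bool -> Prop) bs i :
  (forall b x, b \in bs -> P (b.1.1 ++ x) (b.1.2 ++ x)) ->
  i < size (blocks_dom bs) -> P (nth [::] (blocks_dom bs) i) (nth [::] (blocks_rng bs) i).
Proof.
elim: bs i => [//|b bs IH] i HP.
rewrite /blocks_dom /blocks_rng /= -/(blocks_dom bs) -/(blocks_rng bs) !nth_cat !size_cat !size_map.
case: ifP => Hi H; first by rewrite !(nth_map [::]) //; apply: HP; rewrite mem_head.
apply: IH => [c x Hc|]; first by apply: HP; rewrite in_cons Hc orbT.
by rewrite ltn_subLR // leqNgt Hi.
Qed.

Definition rotate (a : letter) (T : tree) : tree :=
  match a, T with
  | X0, Node (Node A1 A2) B => Node A1 (Node A2 B)
  | X0i, Node A (Node B1 B2) => Node (Node A B1) B2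
  | X1, Node A (Node (Node C D) E) => Node A (Node C (Node D E))
  | X1i, Node A (Node C (Node D E)) => Node A (Node (Node C D) E)
  | _, _ => T
  end.

Definition rotatable (a : letter) (T : tree) : bool :=
  match a, T with
  | X0, Node (Node _ _) _ | X0i, Node _ (Node _ _)
  | X1, Node _ (Node (Node _ _) _) | X1i, Node _ (Node _ (Node _ _)) => true
  | _, _ => false
  end.

Definition letter_blocks (a : letter) (Xs : seq (seq (seq bool))) : seq block :=
  zip (zip (leaves (letter_dom a)) (leaves (letter_rng a))) Xs.

Lemma tp_map_rotate_blocks a T T2 Xs :
  size Xs = size (leaves (letter_dom a)) ->
  leaves (rotate a T) = blocks_dom (letter_blocks a Xs) ->
  leaves T = blocks_rng (letter_blocks a Xs) ->
  tree_pair T T2 ->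
  tree_pair (rotate a T) T2 /\
  tp_map (rotate a T) T2 = (fun s => tp_map T T2 (letter_map a s)).
Proof.
set bs := letter_blocks a Xs => HX E1 E2 Htp.
split; first by rewrite /tree_pair E1 size_blocks -E2.
apply: tp_map_eq => i Hi s.
have HP b x : b \in bs -> forall t, letter_map a (prepend (b.1.1 ++ x) t) = prepend (b.1.2 ++ x) t.
  move=> /(nthP ([::], [::], [::])) [k Hk <-] t.
  have Hdr := letter_tree_pair a.
  move: Hk; rewrite !size_zip -Hdr minnn HX minnn => Hk.
  rewrite nth_zip ?size_zip -?Hdr ?minnn // nth_zip //= !prepend_cat letter_mapE.
  by rewrite tp_map_leaf.
rewrite E1 in Hi *.
rewrite (@nth_blocks (fun u u' => forall t, letter_map a (prepend u t) = prepend u' t)) //.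
by rewrite -E2 tp_map_leaf // E2 -size_blocks.
Qed.

Lemma tp_map_rotate a T T2 : rotatable a T -> tree_pair T T2 ->
  tree_pair (rotate a T) T2 /\
  tp_map (rotate a T) T2 = (fun s => tp_map T T2 (letter_map a s)).
Proof.
case: a; case: T => // A B; [case: A => // A1 A2 | case: B => // B1 B2
  | case: B => // [[//|C D] E] | case: B => // [C [//|D E]]] => _;
  [apply: (@tp_map_rotate_blocks _ _ _ [:: leaves A1; leaves A2; leaves B])
  | apply: (@tp_map_rotate_blocks _ _ _ [:: leaves A; leaves B1; leaves B2])
  | apply: (@tp_map_rotate_blocks _ _ _ [:: leaves A; leaves C; leaves D; leaves E])..] => //;
  by rewrite /letter_blocks /blocks_dom /blocks_rng /= ?map_cat ?cats0 -?catA -?map_comp.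
Qed.

Fixpoint expand_at (T : tree) (i : nat) : tree :=
  match T with
  | Leaf => Node Leaf Leaf
  | Node l r => if i < size (leaves l) then Node (expand_at l i) r
                else Node l (expand_at r (i - size (leaves l)))
  end.

Lemma carets_expand T i : carets (expand_at T i) = (carets T).+1.
Proof.
by elim: T i => [//|l IHl r IHr] i /=; case: ifP => _ /=; rewrite ?IHl ?IHr ?addSn ?addnS.
Qed.

Lemma size_leaves_expand T i : size (leaves (expand_at T i)) = (size (leaves T)).+1.
Proof. by rewrite !size_leaves carets_expand. Qed.

Lemma drop_cat_leq (T : Type) (s1 s2 : seq T) n :
  n <= size s1 -> drop n (s1 ++ s2) = drop n s1 ++ s2.
Proof.
rewrite leq_eqVlt => /orP [/eqP ->|Hn]; last by rewrite drop_cat Hn.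
by rewrite drop_size_cat // drop_size.
Qed.

Lemma leaves_expand T i : i < size (leaves T) ->
  leaves (expand_at T i) = take i (leaves T) ++
    [:: rcons (nth [::] (leaves T) i) false; rcons (nth [::] (leaves T) i) true]
    ++ drop i.+1 (leaves T).
Proof.
elim: T i => [|l IHl r IHr] i /=; first by case: i.
rewrite size_cat !size_map => Hi; rewrite nth_cat size_map.
case: ifP => Hil /=.
  rewrite IHl // takel_cat; last by rewrite size_map ltnW.
  rewrite drop_cat_leq ?size_map //.
  by rewrite (nth_map [::]) // !map_cat !map_take !map_drop -!catA.
have Hli : size (leaves l) <= i by rewrite leqNgt Hil.
have Hir : i - size (leaves l) < size (leaves r) by rewrite ltn_subLR.
rewrite IHr // take_cat drop_cat size_map Hil ltnNge (leq_trans Hli) //.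
by rewrite (nth_map [::]) // !map_cat !map_take !map_drop -!catA /= subSn.
Qed.

Lemma nth_expand T i j : i < size (leaves T) ->
  nth [::] (leaves (expand_at T i)) j =
  if j < i then nth [::] (leaves T) j
  else if j == i then rcons (nth [::] (leaves T) i) false
  else if j == i.+1 then rcons (nth [::] (leaves T) i) true
  else nth [::] (leaves T) j.-1.
Proof.
move=> Hi; rewrite leaves_expand // nth_cat size_take Hi.
case: ifP => Hji; first by rewrite nth_take.
case: eqP => [->|Hne]; first by rewrite subnn.
case: eqP => [->|Hne2]; first by rewrite subSn // subnn.
have [k ->] : exists k, j = i.+2 + k.
  by exists (j - i.+2); rewrite subnKC //; lia.
by rewrite (_ : i.+2 + k - i = k.+2) /= ?nth_drop ?addSn //; lia.
Qed.

Lemma tp_map_expand T1 T2 i : tree_pair T1 T2 -> i < size (leaves T1) ->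
  tree_pair (expand_at T1 i) (expand_at T2 i) /\
  tp_map (expand_at T1 i) (expand_at T2 i) = tp_map T1 T2.
Proof.
move=> Htp Hi; have Hi2 : i < size (leaves T2) by rewrite -Htp.
split; first by rewrite /tree_pair !size_leaves_expand Htp.
apply: tp_map_eq => j Hj s; rewrite size_leaves_expand in Hj.
rewrite !nth_expand //.
case: ifP => Hji; first by rewrite tp_map_leaf // (ltn_trans Hji).
case: eqP => [_|Hne]; first by rewrite -!cats1 !prepend_cat tp_map_leaf.
case: eqP => [_|Hne2]; first by rewrite -!cats1 !prepend_cat tp_map_leaf.
by rewrite tp_map_leaf //; case: j Hj Hji Hne {Hne2} => [|j] //=; case: i {Hi Hi2}.
Qed.

Definition caret_at (T : tree) (k : nat) (a : seq bool) : Prop :=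
  [/\ k.+1 < size (leaves T), nth [::] (leaves T) k = rcons a false
    & nth [::] (leaves T) k.+1 = rcons a true].

Lemma exposedE T k : exposed T k <-> exists a, caret_at T k a.
Proof. by split=> [[? [a [? ?]]]|[a [? ? ?]]]; [exists a|split=> //; exists a]. Qed.

Lemma caret_at_Node_l l r k a : caret_at l k a -> caret_at (Node l r) k (false :: a).
Proof.
move=> [Hk H1 H2]; have Hk' : k.+1 < size (leaves (Node l r)).
  by rewrite size_leaves_Node ltn_addr.
by split; rewrite ?nth_leaves_Node_l ?H1 ?H2 // ltnW.
Qed.

Lemma caret_at_Node_r l r k a : caret_at r k a ->
  caret_at (Node l r) (size (leaves l) + k) (true :: a).
Proof.
move=> [Hk H1 H2]; split; last by rewrite -addnS nth_leaves_Node_r // H2.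
  by rewrite size_leaves_Node -addnS ltn_add2l.
by rewrite nth_leaves_Node_r ?H1 // ltnW.
Qed.

Lemma nth_leaves_Node_cons l r i b u : i < size (leaves (Node l r)) ->
  nth [::] (leaves (Node l r)) i = b :: u ->
  if b then size (leaves l) <= i /\ nth [::] (leaves r) (i - size (leaves l)) = u
  else i < size (leaves l) /\ nth [::] (leaves l) i = u.
Proof. by move=> Hi; rewrite nth_leaves_Node //; case: ifP => Hil [<- <-]; rewrite // leqNgt Hil. Qed.

Lemma nth_leaves_nil T i : i < size (leaves T) -> nth [::] (leaves T) i = [::] -> T = Leaf.
Proof. by case: T => // l r Hi; rewrite nth_leaves_Node //; case: ifP. Qed.

Lemma exposed_caret_exists T : T <> Leaf -> exists k a, caret_at T k a.
Proof.
elim: T => [//|l IHl r IHr] _.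
case Hl: l IHl => [|l1 l2] IHl; last first.
  by have [k [a /(caret_at_Node_l r) ?]] := IHl ltac:(done); exists k, (false :: a).
case Hr: r IHr => [|r1 r2] IHr; first by exists 0, [::].
have [k [a /(caret_at_Node_r Leaf) ?]] := IHr ltac:(done).
by exists (size (leaves Leaf) + k), (true :: a).
Qed.

Lemma exposed_caret_below T i p r : i < size (leaves T) ->
  nth [::] (leaves T) i = p ++ r -> r <> [::] ->
  exists k c, caret_at T k (p ++ c).
Proof.
elim: T i p => [|l IHl r' IHr] i p Hi.
  by case: i Hi => // _; case: p => //= ->.
case: p => [|b p] Hn Hr; first exact: exposed_caret_exists.
move: (nth_leaves_Node_cons Hi Hn); case: b {Hn} => [[Hli Hn']|[Hil Hn']].
  have Hir : i - size (leaves l) < size (leaves r').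
    by rewrite ltn_subLR // -size_leaves_Node.
  have [k [c /(caret_at_Node_r l) ?]] := IHr _ p Hir Hn' Hr.
  by exists (size (leaves l) + k), c.
by have [k [c /(caret_at_Node_l r') ?]] := IHl i p Hil Hn' Hr; exists k, c.
Qed.

Lemma caret_at_expand T i a : caret_at T i a ->
  exists T', T = expand_at T' i /\ i < size (leaves T').
Proof.
elim: T i a => [|l IHl r IHr] i a [Hs H1 H2]; first by [].
have Hi := ltnW Hs.
case: a H1 H2 => [|[|] a] /= H1 H2.
- have [Hil El] := nth_leaves_Node_cons Hi H1.
  have [Hli Er] := nth_leaves_Node_cons Hs H2.
  have El' := nth_leaves_nil Hil El; subst l.
  have Hi0 : i = 0 by move: Hil; rewrite ltnS leqn0 => /eqP.
  subst i; have Er' := nth_leaves_nil (i := 0) _ Er.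
  by exists Leaf; rewrite Er' // size_leaves.
- have [Hli Er1] := nth_leaves_Node_cons Hi H1.
  have [_ Er2] := nth_leaves_Node_cons Hs H2.
  have Hs' : (i - size (leaves l)).+1 < size (leaves r).
    by rewrite -subSn // ltn_subLR -?size_leaves_Node // ltnW.
  have Er2' : nth [::] (leaves r) (i - size (leaves l)).+1 = rcons a true.
    by rewrite -subSn.
  have [r' [-> Hr']] := IHr _ a (And3 Hs' Er1 Er2').
  exists (Node l r'); rewrite /= ltnNge Hli; split => //.
  by rewrite size_cat !size_map -ltn_subLR.
- have [Hil El1] := nth_leaves_Node_cons Hi H1.
  have [Hsl El2] := nth_leaves_Node_cons Hs H2.
  have [l' [-> Hl']] := IHl _ a (And3 Hsl El1 El2).
  by exists (Node l' r); rewrite /= Hl' size_cat !size_map ltn_addr.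
Qed.

Lemma reduce_tree_pair T1 T2 : tree_pair T1 T2 ->
  exists R1 R2, [/\ tree_pair R1 R2, tp_map R1 R2 = tp_map T1 T2, reduced R1 R2
                  & carets R1 <= carets T1].
Proof.
have [n Hn] : exists n, carets T1 = n by exists (carets T1).
elim/ltn_ind: n T1 T2 Hn => n IH T1 T2 Hn Htp.
case: (classic (reduced T1 T2)) => Hr; first by exists T1, T2.
have [i [/exposedE [a1 E1] /exposedE [a2 E2]]] := NNPP _ Hr.
have [T1' [ET1 Hi1]] := caret_at_expand E1.
have [T2' [ET2 _]] := caret_at_expand E2.
have Htp' : tree_pair T1' T2'.
  by move: Htp; rewrite /tree_pair ET1 ET2 !size_leaves_expand => -[].
have Hc : carets T1' < n by rewrite -Hn ET1 carets_expand.
have [R1 [R2 [H1 H2 H3 H4]]] := IH _ Hc T1' T2' erefl Htp'.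
exists R1, R2; split => //; last by rewrite Hn (leq_trans H4) // ltnW.
by rewrite H2 ET1 ET2; case: (tp_map_expand Htp' Hi1).
Qed.

(* In a reduced diagram no proper prefix of a domain leaf is moved by a prefix replacement:
   otherwise the caret exposed below that prefix would be a common exposed caret. *)
Lemma reduced_no_prefix_replacement T1 T2 i p r : tree_pair T1 T2 -> reduced T1 T2 ->
  i < size (leaves T1) -> nth [::] (leaves T1) i = p ++ r -> r <> [::] ->
  ~ exists q, forall s, tp_map T1 T2 (prepend p s) = prepend q s.
Proof.
move=> Htp Hred Hi Hn Hr [q Hq].
have [k [c [H1 H2 H3]]] := exposed_caret_below Hi Hn Hr.
apply: Hred; exists k; split; apply/exposedE; first by exists (p ++ c).
exists (q ++ c); split; first by rewrite -Htp.
  apply: prepend_inj => s; rewrite -(tp_map_leaf T2 s (ltnW H1)) H2.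
  by rewrite -!cats1 -catA !prepend_cat Hq.
apply: prepend_inj => s; rewrite -(tp_map_leaf T2 s H1) H3.
by rewrite -!cats1 -catA !prepend_cat Hq.
Qed.

Section ReducedMinimal.
Variables T1 T2 S1 S2 : tree.
Hypotheses (Htp : tree_pair T1 T2) (Hred : reduced T1 T2).
Hypothesis Eg : tp_map S1 S2 = tp_map T1 T2.

Let zero : stream := fun _ => false.
Let leaf_index i := (locate S1 (prepend (nth [::] (leaves T1) i) zero) 0).1.

Lemma reduced_leaf_prefix i : i < size (leaves T1) ->
  leaf_index i < size (leaves S1) /\
  exists r, nth [::] (leaves S1) (leaf_index i) = nth [::] (leaves T1) i ++ r.
Proof.
move=> Hi; rewrite /leaf_index.
have := locateP S1 (prepend (nth [::] (leaves T1) i) zero) 0.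
case: (locate _ _ _) => j d [Hjs _ Hpre] /=; split => //.
set u := nth [::] (leaves T1) i; set w := nth [::] (leaves S1) j.
case: (leqP (size u) (size w)) => Hsz.
  by exists (drop (size u) w); apply: (prefix_at_take (@prefix_at_prepend u zero) Hpre).
have Eu := prefix_at_take Hpre (@prefix_at_prepend u zero) (ltnW Hsz).
exfalso; apply: (@reduced_no_prefix_replacement T1 T2 i w (drop (size w) u)) => //.
  by move=> Hd; move: Hsz; rewrite Eu Hd cats0 ltnn.
by exists (nth [::] (leaves S2) j) => s; rewrite -Eg tp_map_leaf.
Qed.

Lemma leaf_index_inj : {in iota 0 (size (leaves T1)) &, injective leaf_index}.
Proof.
move=> i1 i2; rewrite !mem_iota !add0n => Hi1 Hi2 E.
have [_ [r1 E1]] := reduced_leaf_prefix Hi1; have [_ [r2 E2]] := reduced_leaf_prefix Hi2.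
rewrite E in E1; pose t := prepend (nth [::] (leaves S1) (leaf_index i2)) zero.
have P1 : prefix_at 0 (nth [::] (leaves T1) i1) t by rewrite /t E1 prepend_cat; apply: prefix_at_prepend.
have P2 : prefix_at 0 (nth [::] (leaves T1) i2) t by rewrite /t E2 prepend_cat; apply: prefix_at_prepend.
by have := locate_leaf Hi1 P1; rewrite (locate_leaf Hi2 P2) => -[].
Qed.

Lemma reduced_carets_min : carets T1 <= carets S1.
Proof.
have Hsub : {subset map leaf_index (iota 0 (size (leaves T1))) <= iota 0 (size (leaves S1))}.
  move=> j /mapP [i]; rewrite mem_iota add0n => Hi ->.
  by rewrite mem_iota add0n; case: (reduced_leaf_prefix Hi).
have Hu : uniq (map leaf_index (iota 0 (size (leaves T1)))).
  by rewrite (map_inj_in_uniq leaf_index_inj) iota_uniq.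
by have := uniq_leq_size Hu Hsub; rewrite size_map !size_iota !size_leaves.
Qed.

End ReducedMinimal.

Definition diagram_of (g : map_st) (P : tree * tree) :=
  tree_pair P.1 P.2 /\ tp_map P.1 P.2 = g.

Lemma diagram_of_expand g T1 T2 i T1' : diagram_of g (T1, T2) -> i < size (leaves T1) ->
  expand_at T1 i = T1' -> diagram_of g (T1', expand_at T2 i).
Proof. by move=> [Htp <-] Hi <-; have [? ?] := tp_map_expand Htp Hi. Qed.

(* Adding the carets a letter needs in order to rotate the domain tree. *)
Definition grow_root (P : tree * tree) := match P.1 with
  | Leaf => (Node Leaf Leaf, expand_at P.2 0) | _ => P end.
Definition grow_left (P : tree * tree) := match P.1 with
  | Node Leaf B => (Node (Node Leaf Leaf) B, expand_at P.2 0) | _ => P end.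
Definition grow_right (P : tree * tree) := match P.1 with
  | Node A Leaf => (Node A (Node Leaf Leaf), expand_at P.2 (size (leaves A))) | _ => P end.
Definition grow_right_left (P : tree * tree) := match P.1 with
  | Node A (Node Leaf E) => (Node A (Node (Node Leaf Leaf) E), expand_at P.2 (size (leaves A)))
  | _ => P end.
Definition grow_right_right (P : tree * tree) := match P.1 with
  | Node A (Node C Leaf) =>
      (Node A (Node C (Node Leaf Leaf)), expand_at P.2 (size (leaves A) + size (leaves C)))
  | _ => P end.

Lemma size_leaves_Node_l A B : size (leaves A) < size (leaves (Node A B)).
Proof. by rewrite size_leaves_Node -addn1 leq_add2l size_leaves. Qed.

Lemma expand_Node_r A B : expand_at (Node A B) (size (leaves A)) = Node A (expand_at B 0).
Proof. by rewrite /= ltnn subnn. Qed.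

Lemma diagram_of_grow_root g P : diagram_of g P -> diagram_of g (grow_root P).
Proof. by case: P => [[|A B] T2] H //; apply: diagram_of_expand H _ _. Qed.

Lemma diagram_of_grow_left g P : diagram_of g P -> diagram_of g (grow_left P).
Proof. by case: P => [[|[|A1 A2] B] T2] H //; apply: diagram_of_expand H _ _. Qed.

Lemma diagram_of_grow_right g P : diagram_of g P -> diagram_of g (grow_right P).
Proof.
case: P => [[|A [|B1 B2]] T2] H //.
exact: diagram_of_expand H (size_leaves_Node_l _ _) (expand_Node_r _ _).
Qed.

Lemma diagram_of_grow_right_left g P : diagram_of g P -> diagram_of g (grow_right_left P).
Proof.
case: P => [[|A [|[|C D] E]] T2] H //.
by apply: diagram_of_expand H (size_leaves_Node_l _ _) _; rewrite expand_Node_r.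
Qed.

Lemma diagram_of_grow_right_right g P : diagram_of g P -> diagram_of g (grow_right_right P).
Proof.
case: P => [[|A [|C [|D E]]] T2] H //; apply: diagram_of_expand H _ _.
  by rewrite !size_leaves_Node -addn1 -addnA leq_add2l leq_add2l size_leaves.
by rewrite /= ltnNge leq_addr /= addKn ltnn.
Qed.

Definition grow (a : letter) (P : tree * tree) := match a with
  | X0 => grow_left (grow_root P) | X0i => grow_right (grow_root P)
  | X1 => grow_right_left (grow_right (grow_root P))
  | X1i => grow_right_right (grow_right (grow_root P)) end.

Lemma rotatable_grow a T1 T2 : rotatable a (grow a (T1, T2)).1.
Proof.
case: a; case: T1 => [|A B] //=; [case: A | case: B | case: B => [|[|C D] E] | case: B => [|C [|D E]]] => //.
Qed.

Lemma diagram_of_grow a g P : diagram_of g P -> diagram_of g (grow a P).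
Proof.
case: a => H /=.
- exact/diagram_of_grow_left/diagram_of_grow_root.
- exact/diagram_of_grow_right/diagram_of_grow_root.
- exact/diagram_of_grow_right_left/diagram_of_grow_right/diagram_of_grow_root.
- exact/diagram_of_grow_right_right/diagram_of_grow_right/diagram_of_grow_root.
Qed.

Definition step (a : letter) (P : tree * tree) :=
  let Q := grow a P in (rotate a Q.1, Q.2).

Lemma diagram_of_step a g P : diagram_of g P ->
  diagram_of (fun s => g (letter_map a s)) (step a P).
Proof.
case: P => T1 T2 H; have [Htp Hm] := diagram_of_grow a H.
have [? E] := tp_map_rotate (rotatable_grow a T1 T2) Htp.
by split => //=; rewrite E Hm.
Qed.

(* A letter may add up to three carets to the domain tree; [deficit] pays for the extra ones,
   so that [carets + deficit] grows by at most one per letter. *)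
Definition deficit (T : tree) := match T with Leaf => 2 | Node _ Leaf => 1 | _ => 0 end.

Lemma potential_step a P :
  carets (step a P).1 + deficit (step a P).1 <= carets P.1 + deficit P.1 + 1.
Proof.
case: P => T1 T2; case: a; case: T1 => [|A B] /=; try lia.
- by case: A => [|A1 A2] /=; case: B => [|B1 B2] /=; lia.
- by case: B => [|B1 B2] /=; try lia; case: B2 => /=; lia.
- by case: B => [|[|C D'] E] /=; try lia; case: E => /=; lia.
- by case: B => [|C [|D' E]] /=; lia.
Qed.

Fixpoint steps (P : tree * tree) (w : word) : tree * tree :=
  if w is a :: w then steps (step a P) w else P.

Lemma diagram_of_steps w g P : diagram_of g P ->
  diagram_of (fun s => g (eval w s)) (steps P w).
Proof.
elim: w g P => [|a w IH] g P H /=; first by case: P H.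
exact: (IH _ _ (diagram_of_step a H)).
Qed.

Lemma potential_steps w P :
  carets (steps P w).1 + deficit (steps P w).1 <= carets P.1 + deficit P.1 + size w.
Proof.
elim: w P => [|a w IH] P /=; first by rewrite addn0.
by apply: leq_trans (IH _) _; have := potential_step a P; lia.
Qed.

Lemma diagram_of_word w : diagram_of (eval w) (steps (Leaf, Leaf) w).
Proof.
have Hid : diagram_of id (Leaf, Leaf) by split => //=; rewrite tp_map_id.
exact: (diagram_of_steps w Hid).
Qed.

Fixpoint rotates_to (T : tree) (w : word) (T' : tree) : Prop :=
  if w is a :: w then rotatable a T /\ rotates_to (rotate a T) w T' else T = T'.

Lemma tp_map_rotates_to w T T' V : rotates_to T w T' -> tree_pair T V ->
  tree_pair T' V /\ tp_map T' V = (fun s => tp_map T V (eval w s)).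
Proof.
elim: w T => [|a w IH] T /=; first by move=> <-.
move=> [Hv Hr] Htp; have [H1 H2] := tp_map_rotate Hv Htp.
by have [? ->] := IH _ Hr H1; rewrite H2.
Qed.

Fixpoint left_comb n := if n is n.+1 then Node (left_comb n) Leaf else Leaf.
Fixpoint right_depth T := if T is Node _ r then (right_depth r).+1 else 0.

Lemma right_depth_le T : right_depth T <= carets T.
Proof. by elim: T => [//|l _ r IH] /=; lia. Qed.

Lemma carets_left_comb n : carets (left_comb n) = n.
Proof. by elim: n => //= n ->; rewrite addn0. Qed.

(* Both x0^-1 (moving a spine caret with empty left subtree into the comb) and x1 (a right
   rotation lengthening the spine) decrease [2 * carets B - right_depth B] by one. *)
Lemma rotates_to_left_comb_spine m B k : 2 * carets B - right_depth B <= m ->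
  exists w, rotates_to (Node (left_comb k) B) w (left_comb (k + carets B).+1) /\
            size w + right_depth B <= 2 * carets B.
Proof.
elim: m B k => [|m IH] B k.
  case: B => [|B1 B2] /=; first by exists [::]; rewrite addn0.
  by have := right_depth_le B2; lia.
case: B => [|[|C D] E] Hm /=; first by exists [::]; rewrite addn0.
  have := right_depth_le E => Hs.
  have [w [Hr Hw]] := IH E k.+1 ltac:(simpl in *; lia).
  exists (X0i :: w); split; last by move: Hw => /=; lia.
  by split => //=; move: Hr => /=; rewrite add0n addnS.
have := right_depth_le E => Hs.
have [w [Hr Hw]] := IH (Node C (Node D E)) k ltac:(simpl in *; lia).
exists (X1 :: w); split; last by move: Hw => /=; lia.
split => //=; move: Hr => /=.
by rewrite (_ : (carets C + (carets D + carets E).+1).+1 = ((carets C + carets D).+1 + carets E).+1) //; lia.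
Qed.

Lemma rotates_to_left_comb_Node A B :
  exists w, rotates_to (Node A B) w (left_comb (carets A + carets B).+1) /\
            size w + right_depth B <= 2 * carets A + 2 * carets B.
Proof.
elim: A B => [|A1 IH1 A2 _] B.
  have [w [H1 H2]] := @rotates_to_left_comb_spine _ B 0 (leqnn _).
  by exists w; split; rewrite /= ?add0n.
have [w [H1 H2]] := IH1 (Node A2 B).
exists (X0 :: w); split; last by move: H2 => /=; lia.
by split => //; move: H1 => /=; rewrite addnS -addnA.
Qed.

Lemma rotates_to_left_comb T :
  exists w, rotates_to T w (left_comb (carets T)) /\ size w <= 2 * carets T.
Proof.
case: T => [|A B]; first by exists [::].
by have [w [H1 H2]] := rotates_to_left_comb_Node A B; exists w; split => //=; lia.
Qed.

(* Rotating each tree to the left comb with at most 2n letters writes g as w2 w1^-1. *)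
Lemma word_of_tree_pair T1 T2 : tree_pair T1 T2 ->
  exists w, eval w = tp_map T1 T2 /\ size w <= 4 * carets T1.
Proof.
move=> Htp.
have Hc : carets T2 = carets T1 by move: Htp; rewrite /tree_pair !size_leaves => -[].
set n := carets T1.
have [w1 [R1 S1]] := rotates_to_left_comb T1; have [w2 [R2 S2]] := rotates_to_left_comb T2.
rewrite Hc -/n in R2 S2.
have HT2 : tree_pair T2 (left_comb n) by rewrite /tree_pair !size_leaves carets_left_comb Hc.
have [_ E2] := tp_map_rotates_to R2 HT2.
have [_ E1] := tp_map_rotates_to R1 Htp.
have Etp : tp_map (left_comb n) T2 = eval w2.
  apply: functional_extensionality => s.
  have Hs : tp_map T2 (left_comb n) (eval w2 s) = s.
    by have := congr1 (fun f => f s) E2; rewrite tp_map_id.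
  by rewrite -{1}Hs (congr1 (fun f => f (eval w2 s)) (tp_map_comp _ HT2)) tp_map_id.
exists (w2 ++ winv w1); split; last by rewrite size_cat size_winv; lia.
by apply: functional_extensionality => s; rewrite eval_cat -Etp E1 eval_winv.
Qed.

Lemma Ncar_spec w : Ncarets (eval w) (Ncar (eval w)).
Proof.
apply: epsilon_spec; have [H1 H2] := diagram_of_word w.
have [R1 [R2 [H3 H4 H5 H6]]] := reduce_tree_pair H1.
by exists (carets R1), R1, R2; split => //; apply/feqE; rewrite H4 H2.
Qed.

Lemma Ncar_diagram w : exists T1 T2,
  [/\ tree_pair T1 T2, tp_map T1 T2 = eval w & carets T1 = Ncar (eval w)].
Proof. by have [T1 [T2 [? /feqE ? ? ?]]] := Ncar_spec w; exists T1, T2. Qed.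

Lemma Ncar_le_carets w S1 S2 : tree_pair S1 S2 -> tp_map S1 S2 = eval w ->
  Ncar (eval w) <= carets S1.
Proof.
move=> Hs Es; have [T1 [T2 [H1 /feqE H2 H3 <-]]] := Ncar_spec w.
by apply: (reduced_carets_min (S2 := S2) H1 H3); rewrite Es H2.
Qed.

Lemma Ncar_nil : Ncar (eval [::]) = 0.
Proof. by apply/eqP; rewrite -leqn0 (@Ncar_le_carets [::] Leaf Leaf) ?tp_map_id. Qed.

Lemma Ncar_cat w u : Ncar (eval (w ++ u)) <= Ncar (eval w) + size u + 2.
Proof.
have [T1 [T2 [H1 H2 H3]]] := Ncar_diagram w.
have [H4 H5] := diagram_of_steps u (conj H1 H2 : diagram_of (eval w) (T1, T2)).
have E : tp_map (steps (T1, T2) u).1 (steps (T1, T2) u).2 = eval (w ++ u).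
  by rewrite H5; apply: functional_extensionality => s; rewrite eval_cat.
have := Ncar_le_carets H4 E; have := potential_steps u (T1, T2).
have : deficit T1 <= 2 by case: T1 {H1 H2 H3 H4 H5 E} => // ? [].
rewrite /= H3; lia.
Qed.

Lemma exists_minimizer (A : Type) (f : A -> nat) (P : A -> Prop) :
  (exists x, P x) -> exists x, P x /\ forall y, P y -> f x <= f y.
Proof.
move=> [x Px]; have [n Hn] : exists n, f x = n by exists (f x).
elim/ltn_ind: n x Px Hn => n IH x Px Hn.
case: (classic (exists y, P y /\ f y < n)) => [[y [Py Hy]]|Hmin].
  exact: IH Hy y Py erefl.
exists x; split => // y Py; rewrite Hn leqNgt; apply/negP => Hy.
by apply: Hmin; exists y.
Qed.

Lemma lev_spec w : is_word_length (eval w) (lev (eval w)).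
Proof.
apply: epsilon_spec.
have [u [Hu Hmin]] := @exists_minimizer _ size (fun u => feq (eval u) (eval w)) (ex_intro _ w (fun _ _ => erefl)).
by exists (size u); split => //; exists u.
Qed.

Lemma lev_le_size w u : eval u = eval w -> lev (eval w) <= size u.
Proof. by move=> E; have [_ H] := lev_spec w; apply: H; apply/feqE. Qed.

Lemma lev_word w : exists u, size u = lev (eval w) /\ eval u = eval w.
Proof. by have [[u [H1 /feqE H2]] _] := lev_spec w; exists u. Qed.

Lemma Ncar_le_lev w : Ncar (eval w) <= lev (eval w) + 2.
Proof.
have [u [<- <-]] := lev_word w.
by have := Ncar_cat [::] u; rewrite Ncar_nil.
Qed.

Lemma lev_le_Ncar w : lev (eval w) <= 4 * Ncar (eval w).
Proof.
have [T1 [T2 [H1 H2 <-]]] := Ncar_diagram w.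
have [u [Hu Hs]] := word_of_tree_pair H1.
by apply: leq_trans (lev_le_size (etrans Hu H2)) Hs.
Qed.

Lemma eval_relator j : eval (rel_of j) = id.
Proof.
have [_ <-] := diagram_of_word (rel_of j).
suff -> : (steps (Leaf, Leaf) (rel_of j)).2 = (steps (Leaf, Leaf) (rel_of j)).1.
  exact: tp_map_id.
by case: j => [[|[|j]] Hj] //; vm_compute.
Qed.

(* Going around a closed loop one way or the other, two points on it are joined by at most
   half of the loop. *)
Lemma closed_word_take r i j : eval r = id -> i <= size r -> j <= size r ->
  exists v, size v <= (size r)./2 /\ eval (take j r) = eval (take i r ++ v).
Proof.
move=> Hr; wlog Hij : i j / i <= j => [W Hi Hj|Hi Hj].
  case: (leqP i j) => [Hij|/ltnW Hji]; first exact: W.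
  have [v [Hv E]] := W j i Hji Hj Hi; exists (winv v); rewrite size_winv; split => //.
  by apply: functional_extensionality => s; rewrite eval_cat E eval_cat eval_winv.
have Hhalf := odd_double_half (size r).
have [Hshort|Hlong] := leqP (j - i) (size r)./2.
  exists (drop i (take j r)); rewrite size_drop size_take_min (minn_idPl Hj); split => //.
  by rewrite -{1}(cat_take_drop i (take j r)) take_takel.
exists (winv (take i r) ++ winv (drop j r)); split.
  by rewrite size_cat !size_winv size_drop size_take_min (minn_idPl Hi); rewrite -muln2 in Hhalf; lia.
apply: functional_extensionality => s; rewrite !eval_cat eval_winv.
by rewrite -{1}(eval_winv (drop j r) s) -eval_cat cat_take_drop Hr.
Qed.

Definition base_word (x : point) : word :=
  match x with PVert w | PEdge w _ | PCell w _ => w end.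

(* The vertices of x are read off the closed loop [loop_word x] starting at [base_word x]. *)
Definition loop_word (x : point) : word :=
  match x with PVert _ => [::] | PEdge _ a => [:: a; linv a] | PCell _ j => rel_of j end.

Definition vertex_count (x : point) : nat :=
  match x with PVert _ => 1 | PEdge _ _ => 2 | PCell _ j => size (rel_of j) end.

Definition vertex (x : point) (i : nat) : word := base_word x ++ take i (loop_word x).

Lemma eval_loop_word x : eval (loop_word x) = id.
Proof.
case: x => [w|w a|w j] //=; last exact: eval_relator.
by apply: functional_extensionality => s; exact: letter_mapK.
Qed.

Lemma size_loop_word x : size (loop_word x) <= 14.
Proof. by case: x => [w|w a|w [[|[|j]] Hj]]. Qed.

Lemma vertex_count_gt0 x : 0 < vertex_count x.
Proof. by case: x => [w|w a|w [[|[|j]] Hj]]. Qed.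

Lemma vertex_count_le x : vertex_count x <= (size (loop_word x)).+1.
Proof. by case: x. Qed.

Lemma pt_verticesE x :
  pt_vertices x = [seq eval (vertex x i) | i <- index_iota 0 (vertex_count x)].
Proof.
by case: x => [w|w a|w j] /=; rewrite /vertex /= ?cats0 // /index_iota subn0.
Qed.

Lemma Ncar_vertex x i j : i < vertex_count x -> j < vertex_count x ->
  Ncar (eval (vertex x j)) <= Ncar (eval (vertex x i)) + 9.
Proof.
move=> Hi Hj; have Hloop := vertex_count_le x.
have [v [Hv E]] := closed_word_take (eval_loop_word x) (leq_trans Hi Hloop) (leq_trans Hj Hloop).
have -> : eval (vertex x j) = eval (vertex x i ++ v).
  by apply: functional_extensionality => s; rewrite /vertex -catA !eval_cat E eval_cat.
have Hv7 : size v <= 7.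
  by apply: leq_trans Hv _; rewrite leq_half_double (leq_trans (size_loop_word x)).
by apply: leq_trans (Ncar_cat _ _) _; rewrite -addnA leq_add2l; lia.
Qed.

Lemma bigmin_leq_seq (s : seq nat) (F : nat -> nat) x0 i :
  i \in s -> \big[minn/x0]_(j <- s) F j <= F i.
Proof.
elim: s => [//|a s IH]; rewrite in_cons big_cons => /orP [/eqP ->|Hi].
  by rewrite geq_minl.
by rewrite (leq_trans _ (IH Hi)) // geq_minr.
Qed.

Lemma NmaxE x : Nmax x = \max_(0 <= i < vertex_count x) Ncar (eval (vertex x i)).
Proof. by rewrite /Nmax pt_verticesE big_map. Qed.

Lemma NminE x : Nmin x =
  \big[minn/Ncar (eval (vertex x 0))]_(0 <= i < vertex_count x) Ncar (eval (vertex x i)).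
Proof.
rewrite /Nmin pt_verticesE big_map; congr (\big[minn/Ncar _]_(i <- _) _).
by have := vertex_count_gt0 x; rewrite /index_iota subn0; case: (vertex_count x).
Qed.

Lemma Nmin_le x i : i < vertex_count x -> Nmin x <= Ncar (eval (vertex x i)).
Proof. by move=> Hi; rewrite NminE bigmin_leq_seq // mem_index_iota. Qed.

Lemma Ncar_le_Nmax x i : i < vertex_count x -> Ncar (eval (vertex x i)) <= Nmax x.
Proof. by move=> Hi; rewrite NmaxE (@leq_bigmax_seq _ _ _ _ i) // mem_index_iota. Qed.

Lemma Nmax_le_Nmin x : Nmax x <= Nmin x + 9.
Proof.
rewrite NmaxE; apply/bigmax_leqP_seq => i; rewrite mem_index_iota => /= Hi _.
rewrite NminE big_seq; elim/big_ind: _ => [||j].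
- exact: Ncar_vertex (vertex_count_gt0 x) Hi.
- by move=> m1 m2 H1 H2; rewrite /minn; case: ifP.
- by rewrite mem_index_iota => /= Hj; exact: Ncar_vertex.
Qed.

Local Open Scope ring_scope.

Lemma mean_ge (R : numFieldType) (n : nat) (F : nat -> R) (lo : R) : (0 < n)%N ->
  (forall i, (i < n)%N -> lo <= F i) -> lo <= (\sum_(0 <= i < n) F i) / n%:R.
Proof.
move=> Hn H; rewrite ler_pdivlMr ?ltr0n //.
have -> : lo * n%:R = \sum_(0 <= i < n) lo by rewrite sumr_const_nat subn0 mulr_natr.
by apply: ler_sum_nat => i /andP [_ Hi]; exact: H.
Qed.

Lemma mean_le (R : numFieldType) (n : nat) (F : nat -> R) (hi : R) : (0 < n)%N ->
  (forall i, (i < n)%N -> F i <= hi) -> (\sum_(0 <= i < n) F i) / n%:R <= hi.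
Proof.
move=> Hn H; rewrite ler_pdivrMr ?ltr0n //.
have -> : hi * n%:R = \sum_(0 <= i < n) hi by rewrite sumr_const_nat subn0 mulr_natr.
by apply: ler_sum_nat => i /andP [_ Hi]; exact: H.
Qed.

Definition lev_offset (x : point) : rat :=
  match x with
  | PVert _ => 0
  | PEdge _ _ => 1 / 4%:R
  | PCell _ _ => 1 / 4%:R + 1 / cconst%:R
  end.

Lemma lev_offset_ge0 x : 0 <= lev_offset x.
Proof. by rewrite /lev_offset (_ : cconst = 561%N) //; case: x => *; lra. Qed.

Lemma lev_offset_lt1 x : lev_offset x < 1.
Proof. by rewrite /lev_offset (_ : cconst = 561%N) //; case: x => *; lra. Qed.

Lemma levpE x : levp x =
  (\sum_(0 <= i < vertex_count x) (lev (eval (vertex x i)))%:R) / (vertex_count x)%:R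
  + lev_offset x.
Proof.
have Hsum : \sum_(g <- pt_vertices x) (lev g)%:R =
            \sum_(0 <= i < vertex_count x) (lev (eval (vertex x i)))%:R :> rat.
  by rewrite pt_verticesE big_map.
rewrite -{}Hsum /levp /lev_offset /pt_vertices /vertex_count.
case: x => [w|w a|w j]; last exact: esym (addrA _ _ _).
  by rewrite big_cons big_nil !addr0 divr1.
by rewrite !big_cons big_nil addr0.
Qed.

Theorem lemma5p3 (x : point) :
  [/\ (Nmin x)%:R - 2%:R <= levp x,
      levp x < 4%:R * (Nmax x)%:R + 1
    & (Nmax x - Nmin x <= 9)%N].
Proof.
have Hn := vertex_count_gt0 x.
have Hoff0 := lev_offset_ge0 x; have Hoff1 := lev_offset_lt1 x.
have Hlo : (Nmin x)%:R - 2%:R <=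
    (\sum_(0 <= i < vertex_count x) (lev (eval (vertex x i)))%:R) / (vertex_count x)%:R :> rat.
  apply: mean_ge => // i Hi; rewrite lerBlDr -natrD ler_nat.
  exact: leq_trans (Nmin_le Hi) (Ncar_le_lev _).
have Hhi : (\sum_(0 <= i < vertex_count x) (lev (eval (vertex x i)))%:R) / (vertex_count x)%:R
    <= 4%:R * (Nmax x)%:R :> rat.
  apply: mean_le => // i Hi; rewrite -natrM ler_nat.
  by apply: leq_trans (lev_le_Ncar _) _; rewrite leq_mul2l Ncar_le_Nmax.
rewrite levpE; split; [lra | lra | by rewrite leq_subLR Nmax_le_Nmin].
Qed.
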